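(* Let $n\ge1$ and let $\mathcal{M}\subseteq\mathbb{C}^{2^n}$ be a subspace of dimension greater than one. Then there are two orthonormal vectors $\phi,\psi\in\mathcal{M}$ such that $\sum_{x\in\{0,1\}^n}|\phi(x)|\cdot|\psi(x)|\ge\frac12$.
   Context: Vectors in $\mathbb{C}^{2^n}$ are written $\phi=\sum_{x\in\{0,1\}^n}\phi(x)|x\rangle$ in the standard basis. *)

From HB Require Import structures.
From mathcomp Require Import all_boot all_order all_algebra.
From mathcomp Require Import complex.
From mathcomp Require Import reals.
Set Implicit Arguments. Unset Strict Implicit. Unset Printing Implicit Defensive.
Import Order.TTheory GRing.Theory Num.Theory.
Local Open Scope ring_scope.

(* A vector of C^(2^n) is a row vector 'rV[R[i]]_(2^n); the coordinate
   index i : 'I_(2^n) corresponds to x in {0,1}^n via binary expansion. *)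

Definition cdot (R : rcfType) (N : nat) (u v : 'rV[R[i]]_N) : R[i] :=
  \sum_(x < N) u 0 x * (v 0 x)^*.

Definition orthonormal2 (R : rcfType) (N : nat) (u v : 'rV[R[i]]_N) : Prop :=
  cdot u u = 1 /\ cdot v v = 1 /\ cdot u v = 0.

From HB Require Import structures.
From mathcomp Require Import all_boot all_order all_algebra.
From mathcomp Require Import complex.
From mathcomp Require Import reals.
From mathcomp Require Import spectral sesquilinear.
From mathcomp Require Import ring.
Import Order.TTheory GRing.Theory Num.Theory.
Local Open Scope ring_scope.

(* Take orthonormal a, b in M and, for a unit scalar k, the orthonormal pair
   phi_k = (a + k b)/sqrt 2, psi_k = (a - k b)/sqrt 2.  Pointwise
   |phi_k(x)| |psi_k(x)| = |a(x)^2 - k^2 b(x)^2| / 2, and since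
   |u - v| + |u + v| >= |u| + |v|, the overlaps for k = 1 and k = i add up to
   at least (|a|^2 + |b|^2)/2 = 1; so one of them is at least 1/2. *)

Lemma ler_normD_normB_normD (F : numDomainType) (u v : F) :
  `|u| + `|v| <= `|u - v| + `|u + v|.
Proof.
have Hu : `|u| *+ 2 <= `|u - v| + `|u + v|.
  rewrite -normrMn (_ : u *+ 2 = (u - v) + (u + v)); last by rewrite mulr2n; ring.
  exact: ler_normD.
have Hv : `|v| *+ 2 <= `|u - v| + `|u + v|.
  rewrite -normrMn (_ : v *+ 2 = - (u - v) + (u + v)); last by rewrite mulr2n; ring.
  by rewrite -[X in _ <= X + _]normrN; exact: ler_normD.
by rewrite -(ler_pMn2r (isT : (0 < 2)%N)) mulrnDl [leRHS]mulr2n lerD.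
Qed.

Lemma half_le_or {F : numFieldType} {x y : F} :
  0 <= x -> 0 <= y -> 1 <= x + y -> 2^-1 <= x \/ 2^-1 <= y.
Proof.
move=> x0 y0 xy1; have half0 : 0 <= 2^-1 :> F by rewrite invr_ge0 ler0n.
have [|x_lt] := real_leP (ger0_real half0) (ger0_real x0); first by left.
right; rewrite -(lerD2l x); apply: le_trans xy1.
by rewrite -lerBrDr {1}(splitr 1) mul1r addrK ltW.
Qed.

Section InnerProduct.
Context {R : rcfType} {N : nat}.
Local Notation C := (R[i]).
Implicit Types (a b v phi psi : 'rV[C]_N).

Lemma cdotC a b : cdot b a = (cdot a b)^*.
Proof.
rewrite /cdot rmorph_sum; apply: eq_bigr => x _.
by rewrite rmorphM /= conjCK mulrC.
Qed.

Lemma cdot_self v : cdot v v = \sum_(x < N) `|v 0 x ^+ 2|.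
Proof. by apply: eq_bigr => x _; rewrite normrX normCK. Qed.

Lemma cdot_orthonormal_comb a b x1 y1 x2 y2 : orthonormal2 a b ->
  cdot (x1 *: a + y1 *: b) (x2 *: a + y2 *: b) = x1 * x2^* + y1 * y2^*.
Proof.
move=> [aa [bb ab]]; have ba : cdot b a = 0 by rewrite cdotC ab conjC0.
have -> : cdot (x1 *: a + y1 *: b) (x2 *: a + y2 *: b) =
  x1 * x2^* * cdot a a + x1 * y2^* * cdot a b + y1 * x2^* * cdot b a
  + y1 * y2^* * cdot b b.
  rewrite /cdot !mulr_sumr -!big_split /=; apply: eq_bigr => x _.
  by rewrite !mxE rmorphD !rmorphM /=; ring.
by rewrite aa bb ab ba; ring.
Qed.

Definition overlap phi psi := \sum_(x < N) `|phi 0 x| * `|psi 0 x|.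

Lemma overlap_ge0 phi psi : 0 <= overlap phi psi.
Proof. by apply: sumr_ge0 => x _; rewrite mulr_ge0. Qed.

End InnerProduct.

Section PhaseRotation.
Context {R : rcfType} {N : nat} {a b : 'rV[R[i]]_N}.
Hypothesis ab : orthonormal2 a b.
Local Notation C := (R[i]).

Let c : C := sqrtC 2^-1.

Let c_ge0 : 0 <= c. Proof. by rewrite sqrtC_ge0 invr_ge0 ler0n. Qed.

Let c_sqr : c * c = 2^-1. Proof. by rewrite -expr2 sqrtCK. Qed.

Definition rot_plus (k : C) := c *: a + (c * k) *: b.
Definition rot_minus (k : C) := c *: a + (- (c * k)) *: b.

Lemma orthonormal2_rot (k : C) : k * k^* = 1 ->
  orthonormal2 (rot_plus k) (rot_minus k).
Proof.
move=> kk; have cc : c^* = c by rewrite geC0_conj.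
rewrite /orthonormal2 !cdot_orthonormal_comb // rmorphN !rmorphM /= cc.
have two : (2 : C) != 0 by rewrite pnatr_eq0.
split; [|split].
- by rewrite mulrACA kk mulr1 c_sqr; field.
- by rewrite mulrNN mulrACA kk mulr1 c_sqr; field.
- by rewrite mulrN mulrACA kk mulr1 subrr.
Qed.

Lemma overlap_rotE (k : C) : overlap (rot_plus k) (rot_minus k) =
  2^-1 * \sum_(x < N) `|a 0 x ^+ 2 - k ^+ 2 * b 0 x ^+ 2|.
Proof.
rewrite /overlap mulr_sumr; apply: eq_bigr => x _; rewrite -normrM !mxE.
have -> : (c * a 0 x + c * k * b 0 x) * (c * a 0 x + - (c * k) * b 0 x) =
  c * c * (a 0 x ^+ 2 - k ^+ 2 * b 0 x ^+ 2) by ring.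
by rewrite normrM c_sqr ger0_norm // invr_ge0 ler0n.
Qed.

Lemma overlap_rot_1_i :
  1 <= overlap (rot_plus 1) (rot_minus 1) + overlap (rot_plus 'i) (rot_minus 'i).
Proof.
have [aa [bb _]] := ab.
rewrite !overlap_rotE expr1n sqrCi -mulrDr -big_split /=.
apply: (@le_trans _ _ (2^-1 * \sum_(x < N) (`|a 0 x ^+ 2| + `|b 0 x ^+ 2|))).
  by rewrite big_split /= -!cdot_self aa bb -mulr2n mulVf ?pnatr_eq0.
rewrite ler_pM2l ?invr_gt0 ?ltr0n //; apply: ler_sum => x _.
by rewrite mul1r mulN1r opprK ler_normD_normB_normD.
Qed.

Lemma orthonormal2_half_overlap {m} {U : 'M[C]_(m, N)} :
  (a <= U)%MS -> (b <= U)%MS ->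
  exists phi psi, [/\ (phi <= U)%MS, (psi <= U)%MS, orthonormal2 phi psi
                    & 2^-1 <= overlap phi psi].
Proof.
move=> aU bU; have comb_sub x y : ((x *: a + y *: b)%R <= U)%MS.
  by rewrite addmx_sub ?scalemx_sub.
have [half_1 | half_i] := half_le_or (overlap_ge0 _ _) (overlap_ge0 _ _) overlap_rot_1_i.
- exists (rot_plus 1), (rot_minus 1); split; [exact: comb_sub | exact: comb_sub | | by []].
  by apply: orthonormal2_rot; rewrite conjC1 mulr1.
- exists (rot_plus 'i), (rot_minus 'i); split; [exact: comb_sub | exact: comb_sub | | by []].
  by apply: orthonormal2_rot; rewrite -normCK normCi expr1n.
Qed.

End PhaseRotation.

Lemma orthonormal2_of_rank (R : rcfType) m N (U : 'M[R[i]]_(m, N)) :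
  (1 < \rank U)%N -> exists a b, [/\ (a <= U)%MS, (b <= U)%MS & orthonormal2 a b].
Proof.
move=> rk; pose W := schmidt (row_base U).
have Wu : W \is unitarymx by apply: schmidt_unitarymx; exact: rank_leq_col.
have WU : (W :=: U)%MS.
  exact: eqmx_trans (eqmx_schmidt_free (row_base_free U)) (eq_row_base U).
have Wdot i j : cdot (row i W) (row j W) = (i == j)%:R.
  move/unitarymxP/matrixP: Wu => /(_ i j); rewrite !mxE => <-.
  by apply: eq_bigr => k _; rewrite !mxE.
pose i0 : 'I_(\rank U) := Ordinal (ltnW rk); pose i1 : 'I_(\rank U) := Ordinal rk.
have rowU i : (row i W <= U)%MS by rewrite (submx_trans (row_sub i W)) ?WU.
exists (row i0 W), (row i1 W).
by split; [apply: rowU | apply: rowU | rewrite /orthonormal2 !Wdot].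
Qed.

Theorem lemma3 (R : realType) (n m : nat) (U : 'M[R[i]]_(m, 2 ^ n)) :
  (1 <= n)%N -> (1 < \rank U)%N ->
  exists phi psi : 'rV[R[i]]_(2 ^ n),
    (phi <= U)%MS /\ (psi <= U)%MS /\ orthonormal2 phi psi /\
    2^-1 <= \sum_(x < 2 ^ n) `|phi 0 x| * `|psi 0 x|.
Proof.
move=> _ /orthonormal2_of_rank [a [b [aU bU ab]]].
have [phi [psi [phiU psiU phipsi half]]] := orthonormal2_half_overlap ab aU bU.
by exists phi, psi.
Qed.
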